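(* Let $G$ be an undirected graph, $P$ a set of terminal pairs of $G$, and $x\in V(G)$ such that $G-\{x\}$ is a forest. Assume that each vertex of $G$ occurs in at most one terminal pair, every terminal has degree $1$ in $G$, the two terminals of a pair are not adjacent, every neighbor of $x$ is a leaf of $G-\{x\}$, and $x$ is not a terminal. Then there is a set of pairwise edge-disjoint paths in $G$ connecting every terminal pair in $P$ if and only if every tree $T$ (connected component) of $G-\{x\}$ is $\gamma_\emptyset$-connected.
   Context: For a tree $T$ of $G-\{x\}$, $T$ is $\gamma_\emptyset$-connected if there exists a set $S$ of pairwise edge-disjoint paths in $G[V(T)\cup\{x\}]$ such that for every terminal $a\in V(T)$ belonging to a terminal pair $\{a,b\}\in P$, the set $S$ either contains an $a$–$x$ path not containing $b$, or contains an $a$–$b$ path not containing $x$. *)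

From mathcomp Require Import all_boot.
From mathcomp Require Import finset.
Set Implicit Arguments. Unset Strict Implicit. Unset Printing Implicit Defensive.

Section Graphs.
Variable V : finType.

Definition simple_graph (e : rel V) := symmetric e /\ irreflexive e.

Definition del_vertex (e : rel V) (x : V) : rel V :=
  fun u v => [&& e u v, u != x & v != x].

Definition acyclic (e : rel V) :=
  forall c : seq V, 3 <= size c -> uniq c -> ~~ cycle e c.

Definition deg (e : rel V) (v : V) := #|[set w | e v w]|.

Definition pedges (p : seq V) : seq {set V} :=
  [seq [set uv.1; uv.2] | uv <- zip p (behead p)].

Definition is_path_in (e : rel V) (W : {set V}) (p : seq V) :=
  [/\ (if p is v :: q then path e v q else false), uniq p
      & {subset p <= W}].

Definition ends (p : seq V) (u v : V) :=
  (head u p == u) && (last u p == v) || (head v p == v) && (last v p == u).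

Definition edge_disjoint (p q : seq V) := ~~ has (mem (pedges q)) (pedges p).

Definition edp_family (e : rel V) (W : {set V}) (S : seq (seq V)) :=
  (forall p, p \in S -> is_path_in e W p) /\ pairwise edge_disjoint S.

Definition terminal_pairs (P : {set {set V}}) :=
  (forall p, p \in P -> #|p| = 2) /\
  (forall p q, p \in P -> q \in P -> p != q -> [disjoint p & q]).

Definition component (e : rel V) (v : V) : {set V} := [set w | connect e v w].

Definition gamma0_connected (e : rel V) (P : {set {set V}}) (x : V)
    (C : {set V}) :=
  exists S : seq (seq V), edp_family e (x |: C) S /\
    forall a b, a \in C -> [set a; b] \in P -> a != b ->
      (exists2 p, p \in S & ends p a x && (b \notin p)) \/
      (exists2 p, p \in S & ends p a b && (x \notin p)).

End Graphs.

(* Cutting the paths of an edge-disjoint linkage at x restricts it to each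
   tree T of G - x: the piece of the a-b path that contains a terminal a of T
   stays inside T + x, and either runs from a to x without meeting b, or is the
   whole a-b path and avoids x.  Conversely, pick for every terminal a the path
   that the gamma0-family of its tree provides.  Either one of the two paths
   picked for a pair {a, b} already joins a and b, or they join a to x and x to
   b, and their concatenation shortens to an a-b path using only their edges.
   Paths picked for different pairs are edge-disjoint: inside one tree because
   the family is, across two trees because they share at most the vertex x. *)

From mathcomp Require Import all_boot.
Set Implicit Arguments. Unset Strict Implicit. Unset Printing Implicit Defensive.

Section Pairwise.
Variables (T : eqType) (r : rel T).

Lemma pairwise_sym_in s a b : symmetric r -> pairwise r s ->
  a \in s -> b \in s -> a != b -> r a b.
Proof.
move=> r_sym; elim: s => [|y s IHs] //= /andP [/allP r_y r_s].
rewrite !in_cons => /predU1P [-> | a_s] /predU1P [-> | b_s]; rewrite ?eqxx //.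
- by move=> _; apply: r_y.
- by move=> _; rewrite r_sym; apply: r_y.
- exact: IHs.
Qed.

Lemma uniq_pairwise_in s : uniq s ->
  {in s &, forall a b, a != b -> r a b} -> pairwise r s.
Proof.
by move=> Us r_s; apply: (sub_in_pairwise r_s (allss s)); rewrite -uniq_pairwise.
Qed.

Lemma pairwise_flatten (U : eqType) (r' : rel U) (f : U -> seq T) s :
  pairwise r' s -> (forall p q, r' p q -> allrel r (f p) (f q)) ->
  {in s, forall p, pairwise r (f p)} -> pairwise r (flatten (map f s)).
Proof.
move=> + r'_r; elim: s => [|p s IHs] //= /andP [/allP r'_p r'_s] r_f.
rewrite pairwise_cat r_f ?mem_head // IHs // => [|q q_s]; last first.
  by apply: r_f; rewrite in_cons q_s orbT.
rewrite !andbT; apply/allrelP => y z y_p /flatten_mapP [q q_s z_q].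
exact: (allrelP (r'_r p q (r'_p q q_s))).
Qed.

End Pairwise.

Section PathEdges.
Variable V : finType.
Implicit Types (y z c : V) (s t : seq V) (E : {set V}).

Lemma pedges_cat y s t :
  pedges (y :: s ++ t) = pedges (y :: s) ++ pedges (last y s :: t).
Proof. by elim: s y => [|z s IHs] y //=; rewrite -IHs. Qed.

Lemma pedges_prefix s t : {subset pedges s <= pedges (s ++ t)}.
Proof. by case: s => [|y s] // E; rewrite pedges_cat mem_cat => ->. Qed.

Lemma pedges_suffix s t : {subset pedges t <= pedges (s ++ t)}.
Proof.
case: s => [|y s] // E; rewrite pedges_cat mem_cat.
by case: t => [|z t] //= E_t; rewrite in_cons E_t !orbT.
Qed.

Lemma mem_pedgesP s E : E \in pedges s ->
  exists s1 s2 y z, s = s1 ++ y :: z :: s2 /\ E = [set y; z].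
Proof.
elim: s => [|y [|z s] IHs] //; rewrite [pedges _]/= in_cons.
case/predU1P => [-> | /IHs [s1 [s2 [u [w [-> ->]]]]]]; first by exists [::], s, y, z.
by exists (y :: s1), s2, u, w.
Qed.

Lemma pedges_sub s E : E \in pedges s -> {subset E <= s}.
Proof.
case/mem_pedgesP=> s1 [s2 [y [z [-> ->]]]] w /set2P [] ->;
  by rewrite mem_cat !in_cons eqxx ?orbT.
Qed.

Lemma pedges_rev s : pedges (rev s) =i pedges s.
Proof.
suff sub t : {subset pedges t <= pedges (rev t)}.
  by move=> E; apply/idP/idP => [/sub | /sub //]; rewrite revK.
move=> E /mem_pedgesP [s1 [s2 [y [z [-> ->]]]]].
rewrite rev_cat !rev_cons !cat_rcons setUC.
by apply: pedges_suffix; rewrite /= in_cons eqxx.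
Qed.

Lemma pedges_shorten y0 y t : y \in y0 :: t ->
  {subset pedges (y :: shorten y t) <= pedges (y0 :: t)}.
Proof.
elim: t y0 y => [|z t IHt] y0 y //=; case: ifPn => [y_zt _ | y_zt].
  by move=> E /(IHt z y y_zt) E_zt; rewrite in_cons E_zt orbT.
rewrite in_cons (negbTE y_zt) orbF => /eqP -> E; rewrite !in_cons.
by case/predU1P => [-> | /(IHt z z (mem_head z t)) ->]; rewrite ?eqxx ?orbT.
Qed.

Lemma edge_disjointC s t : edge_disjoint s t = edge_disjoint t s.
Proof.
by apply/idP/idP => /hasPn st; apply/hasPn => E E_t; apply: contraTN E_t; apply: st.
Qed.

Lemma sub_edge_disjoint s t s' t' : edge_disjoint s t ->
  {subset pedges s' <= pedges s} -> {subset pedges t' <= pedges t} ->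
  edge_disjoint s' t'.
Proof.
move=> /hasPn st s's t't; apply/hasPn => E /s's E_s.
by apply: contra (st E E_s); apply: t't.
Qed.

Lemma edge_disjoint_meet1 c s t : uniq s ->
  {in s, forall w, w \in t -> w = c} -> edge_disjoint s t.
Proof.
move=> Us st; apply/hasPn => E E_s; apply/negP => /pedges_sub E_t.
case/mem_pedgesP: E_s Us st E_t => s1 [s2 [y [z [-> ->]]]].
move=> Us st E_t; have /negP yz : y != z.
  by move: Us; rewrite cat_uniq /= in_cons => /and3P [_ _ /andP [/norP []]].
have [y_s z_s] : y \in s1 ++ y :: z :: s2 /\ z \in s1 ++ y :: z :: s2.
  by rewrite !mem_cat !in_cons !eqxx !orbT.
by apply: yz; rewrite (st y y_s (E_t y (set21 y z))) (st z z_s (E_t z (set22 y z))).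
Qed.

End PathEdges.

Section Walks.
Variables (V : finType) (e : rel V).
Implicit Types (W : {set V}) (y : V) (s t : seq V).

Lemma is_path_in_catl W s t :
  s != [::] -> is_path_in e W (s ++ t) -> is_path_in e W s.
Proof.
case: s => [|y s] // _ [p_st U_st sub_st]; split.
- by move: p_st; rewrite cat_path => /andP [].
- by move: U_st; rewrite cat_uniq => /andP [].
- by move=> w w_s; apply: sub_st; rewrite mem_cat w_s.
Qed.

Lemma is_path_in_catr W s t :
  t != [::] -> is_path_in e W (s ++ t) -> is_path_in e W t.
Proof.
case: t => [|z t] // _ [p_st U_st sub_st]; split.
- by case: s {U_st sub_st} p_st => [|y s] //=; rewrite cat_path => /andP [_ /andP []].
- by move: U_st; rewrite cat_uniq => /and3P [].
- by move=> w w_t; apply: sub_st; rewrite mem_cat w_t orbT.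
Qed.

Lemma shorten_walk y t : path e y t ->
  exists t', [/\ path e y t', uniq (y :: t'), last y t' = last y t
                & {subset pedges (y :: t') <= pedges (y :: t)}].
Proof.
move=> p_t; have := pedges_shorten (mem_head y t).
by case: (shortenP p_t) => t' p_t' U_t' _ sub; exists t'.
Qed.

Hypothesis e_sym : symmetric e.

Lemma is_path_in_rev W s : is_path_in e W s -> is_path_in e W (rev s).
Proof.
case: s => [[]|y t] // [p_t U sub]; split.
- rewrite (lastI y t) rev_rcons /= rev_path.
  by rewrite (@eq_path _ _ e) // => u w; rewrite e_sym.
- by rewrite rev_uniq.
- by move=> w; rewrite mem_rev; apply: sub.
Qed.

Lemma walk_between W s u v : is_path_in e W s -> ends s u v ->
  exists t, [/\ path e u t, last u t = v & {subset pedges (u :: t) <= pedges s}].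
Proof.
move=> s_path; have s_nil : s != [::] by case: s s_path => [[]|].
case/orP=> /andP [/eqP hd /eqP lt].
  case: s s_nil s_path hd lt => [|y t] // _ [p_t _ _] /= <- <-.
  by exists t; split=> // E.
case/lastP: s s_nil s_path hd lt => [|b l] // _; rewrite last_rcons => s_path hd <-.
exists (rev b); split.
- by case: (is_path_in_rev s_path); rewrite rev_rcons.
- by case: b hd {s_path} => [|y b] //=; rewrite rev_cons last_rcons.
- by move=> E; rewrite -rev_rcons pedges_rev.
Qed.

End Walks.

Section Ends.
Variable V : finType.
Implicit Types (p : seq V) (u v : V).

(* [ends [::] u v] holds iff [u = v], whence the hypotheses [u != v] below. *)

Lemma ends_sym p u v : ends p u v = ends p v u.
Proof. by rewrite /ends orbC. Qed.

Lemma ends_mem p u v : u != v -> ends p u v -> (u \in p) && (v \in p).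
Proof.
case: p => [|y t] uv; rewrite /ends /=.
  by case/orP=> /andP [_ /eqP uv_eq]; rewrite uv_eq eqxx in uv.
by case/orP=> /andP [/eqP <- /eqP <-]; rewrite mem_head mem_last.
Qed.

Lemma ends_endpoint p u c u' c' : u != c -> ends p u c -> ends p u' c' ->
  (u == u') || (u == c').
Proof.
case: p => [|y t] uc; rewrite /ends /=.
  by case/orP=> /andP [_ /eqP uc_eq]; rewrite uc_eq eqxx in uc.
by do 2!case/orP=> /andP [/eqP ? /eqP ?]; subst; rewrite eqxx ?orbT.
Qed.

Lemma ends_set2 p a b a' b' : a != b -> [set a; b] = [set a'; b'] ->
  ends p a' b' -> ends p a b.
Proof.
move=> + ab_eq; have := set21 a b; have := set22 a b; rewrite ab_eq.
by case/set2P=> -> /set2P [] -> //; rewrite ?eqxx // => _; rewrite ends_sym.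
Qed.

Lemma ends_split p1 p2 x a b : a != x -> b != x -> ends (p1 ++ x :: p2) a b ->
  ends (rcons p1 x) a x && (b \in p2) || ends (x :: p2) a x && (b \in p1).
Proof.
move=> ax bx; have in_p2 : last x p2 != x -> last x p2 \in p2.
  by have := mem_last x p2; rewrite in_cons => /predU1P [->|]; rewrite ?eqxx.
case: p1 => [|y p1]; rewrite /ends /= ?last_cat /=.
  by rewrite !(eq_sym x) (negbTE ax) (negbTE bx).
rewrite last_rcons eqxx (eq_sym x a) (negbTE ax) andbT andbF orbF /=.
case/orP=> /andP [/eqP <- /eqP lb]; first by rewrite eqxx -lb in_p2 // lb.
by rewrite lb eqxx mem_head orbT.
Qed.

End Ends.

Section Components.
Variables (V : finType) (e : rel V) (x : V).
Hypothesis e_sym : symmetric e.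
Local Notation comp := (component (del_vertex e x)).

Lemma del_vertex_sym : symmetric (del_vertex e x).
Proof. by move=> u w; rewrite /del_vertex e_sym [(u != x) && _]andbC. Qed.

Lemma mem_component v : v \in comp v.
Proof. by rewrite inE connect0. Qed.

Lemma component_eq u w : w \in comp u -> comp w = comp u.
Proof.
rewrite inE => uw; apply/setP => z; rewrite !inE.
by rewrite (same_connect (sym_connect_sym del_vertex_sym) uw).
Qed.

Lemma path_sub_component W s w : is_path_in e W s -> x \notin s -> w \in s ->
  {subset s <= comp w}.
Proof.
case: s => [[]|y t] // [p_t _ _] x_s w_s z z_s.
have avoid_x : {in predC1 x &, subrel e (del_vertex e x)}.
  by move=> u v; rewrite !inE => ux vx euv; rewrite /del_vertex euv ux vx.
have p'_t : path (del_vertex e x) y t.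
  by apply: (sub_in_path avoid_x _ p_t); rewrite all_predC has_pred1.
rewrite inE; apply: connect_trans _ (path_connect p'_t z_s).
by rewrite (sym_connect_sym del_vertex_sym) (path_connect p'_t w_s).
Qed.

End Components.

Definition split_at (V : eqType) (x : V) (p : seq V) : seq (seq V) :=
  if x \in p then [:: take (index x p).+1 p; drop (index x p) p] else [:: p].

Section SplitAt.
Variables (V : finType) (e : rel V) (x : V).
Hypothesis e_sym : symmetric e.
Local Notation comp := (component (del_vertex e x)).
Implicit Types (W : {set V}) (p q : seq V).

Lemma split_atE p1 p2 : x \notin p1 ->
  split_at x (p1 ++ x :: p2) = [:: rcons p1 x; x :: p2].
Proof.
move=> x_p1; rewrite /split_at mem_cat mem_head orbT index_cat (negbTE x_p1).
rewrite /= eqxx addn0 take_cat drop_cat ltnn ltnNge leqnSn subSnn subnn /=.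
by rewrite take0 cats1.
Qed.

Lemma split_atP p : uniq p -> x \in p ->
  exists p1 p2, [/\ p = p1 ++ x :: p2, x \notin p1
                   & split_at x p = [:: rcons p1 x; x :: p2]].
Proof.
move=> U x_p; case/splitPr: x_p U => p1 p2 U.
have x_p1 : x \notin p1.
  by move: U; rewrite cat_uniq => /and3P [_ /hasPn /(_ x (mem_head x p2))].
by exists p1, p2; rewrite split_atE.
Qed.

Lemma split_at_pedges p q : q \in split_at x p -> {subset pedges q <= pedges p}.
Proof.
rewrite /split_at; case: ifP => _; rewrite !inE; last by move/eqP ->.
case/orP=> /eqP ->.
  have := @pedges_prefix _ (take (index x p).+1 p) (drop (index x p).+1 p).
  by rewrite cat_take_drop.
have := @pedges_suffix _ (take (index x p) p) (drop (index x p) p).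
by rewrite cat_take_drop.
Qed.

Lemma split_at_edge_disjoint p : uniq p -> pairwise (@edge_disjoint V) (split_at x p).
Proof.
move=> U; case: (boolP (x \in p)) => [x_p | x_p]; last first.
  by rewrite /split_at (negbTE x_p).
have [p1 [p2 [def_p _ ->]]] := split_atP U x_p; rewrite /= !andbT.
apply: (edge_disjoint_meet1 (c := x)) => [|w].
  by move: U; rewrite def_p -cat_rcons cat_uniq => /andP [].
rewrite mem_rcons in_cons => /predU1P [-> //| w_p1] w_p2.
by move: U; rewrite def_p cat_uniq => /and3P [_ /hasPn /(_ w w_p2)]; rewrite w_p1.
Qed.

Lemma split_at_is_path_in W p q :
  is_path_in e W p -> q \in split_at x p -> is_path_in e W q.
Proof.
move=> p_path; have [_ U _] := p_path.
case: (boolP (x \in p)) => [x_p | x_p]; last first.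
  by rewrite /split_at (negbTE x_p) inE => /eqP ->.
have [p1 [p2 [def_p _ ->]]] := split_atP U x_p.
rewrite def_p in p_path; rewrite !inE => /orP [] /eqP ->.
  by move: p_path; rewrite -cat_rcons; apply: is_path_in_catl; case: (p1).
exact: is_path_in_catr p_path.
Qed.

Lemma split_at_component W p q w : is_path_in e W p -> q \in split_at x p ->
  w \in q -> w != x -> {subset q <= x |: comp w}.
Proof.
move=> p_path; have [_ U _] := p_path.
have avoid s : is_path_in e W s -> x \notin s -> w \in s ->
    {subset x :: s <= x |: comp w}.
  move=> s_path x_s w_s z; rewrite in_cons in_setU1 => /predU1P [-> | z_s].
    by rewrite eqxx.
  by rewrite (path_sub_component e_sym s_path x_s w_s z_s) orbT.
case: (boolP (x \in p)) => [x_p | x_p]; last first.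
  rewrite /split_at (negbTE x_p) inE => /eqP -> w_p _ z z_p.
  by apply: (avoid p) => //; rewrite in_cons z_p orbT.
have [p1 [p2 [def_p x_p1 ->]]] := split_atP U x_p.
rewrite def_p in p_path U; rewrite !inE => /orP [] /eqP -> w_q wx z.
  have w_p1 : w \in p1 by move: w_q; rewrite mem_rcons in_cons (negbTE wx).
  have p1_path : is_path_in e W p1 by apply: is_path_in_catl p_path; case: (p1) w_p1.
  by rewrite mem_rcons; apply: avoid.
have w_p2 : w \in p2 by move: w_q; rewrite in_cons (negbTE wx).
have x_p2 : x \notin p2 by move: U; rewrite cat_uniq => /and3P [_ _ /andP []].
have p2_path : is_path_in e W p2.
  apply: (is_path_in_catr _ (s := rcons p1 x)); rewrite ?cat_rcons //.
  by case: (p2) w_p2.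
exact: avoid.
Qed.

End SplitAt.

Lemma notin_cover_neq (T : finType) (P : {set {set T}}) q (a x : T) :
  x \notin cover P -> q \in P -> a \in q -> a != x.
Proof. by move=> x_P q_P a_q; apply: contraNneq x_P => <-; apply/bigcupP; exists q. Qed.

Definition edp_solution (V : finType) (e : rel V) (P : {set {set V}})
    (S : seq (seq V)) :=
  edp_family e [set: V] S /\
    forall a b, [set a; b] \in P -> a != b -> exists2 p, p \in S & ends p a b.

Definition gamma0_witness (V : finType) (e : rel V) (P : {set {set V}}) (x : V)
    (C : {set V}) (S : seq (seq V)) :=
  edp_family e (x |: C) S /\
    forall a b, a \in C -> [set a; b] \in P -> a != b ->
      (exists2 p, p \in S & ends p a x && (b \notin p)) \/
      (exists2 p, p \in S & ends p a b && (x \notin p)).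

Section Restriction.
Variables (V : finType) (e : rel V) (P : {set {set V}}) (x : V).
Hypothesis e_sym : symmetric e.
Hypothesis x_notin_P : x \notin cover P.
Local Notation comp := (component (del_vertex e x)).

Lemma gamma0_connected_of_edp_solution S :
  edp_solution e P S -> forall v, gamma0_connected e P x (comp v).
Proof.
move=> [[S_path S_disj] linked] v; set C := comp v.
pose inC (q : seq V) := all (mem (x |: C)) q.
exists (flatten [seq filter inC (split_at x p) | p <- S]); split; first split.
- move=> q /flatten_mapP [p p_S]; rewrite mem_filter => /andP [/allP q_C q_p].
  by have [? ? _] := split_at_is_path_in (S_path p p_S) q_p; split.
- apply: (pairwise_flatten S_disj) => [p p' pp' | p p_S].
    apply/allrelP => q q'; rewrite !mem_filter => /andP [_ q_p] /andP [_ q'_p'].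
    exact: sub_edge_disjoint pp' (split_at_pedges q_p) (split_at_pedges q'_p').
  by apply/pairwise_filter/split_at_edge_disjoint; case: (S_path p p_S).
move=> a b a_C ab_P ab; have [p p_S ends_ab] := linked a b ab_P ab.
have ax : a != x := notin_cover_neq x_notin_P ab_P (set21 a b).
have bx : b != x := notin_cover_neq x_notin_P ab_P (set22 a b).
have p_path := S_path p p_S; have [_ U _] := p_path.
have selected q : q \in split_at x p -> a \in q ->
    q \in flatten [seq filter inC (split_at x p) | p <- S].
  move=> q_p a_q; apply/flatten_mapP; exists p => //; rewrite mem_filter q_p andbT.
  apply/allP => z z_q; rewrite /C -(component_eq e_sym a_C).
  exact: (split_at_component e_sym p_path q_p a_q ax z_q).
case: (boolP (x \in p)) => x_p; last first.
  right; exists p; last by rewrite ends_ab x_p.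
  apply: selected; first by rewrite /split_at (negbTE x_p) mem_head.
  by case/andP: (ends_mem ab ends_ab).
have [p1 [p2 [def_p _ pieces]]] := split_atP U x_p.
have disj : {in x :: p2, forall w, w \notin p1}.
  by move: U; rewrite def_p cat_uniq => /and3P [_ /hasPn].
left; rewrite def_p in ends_ab.
case/orP: (ends_split ax bx ends_ab) => /andP [ends_q b_q].
  exists (rcons p1 x); last first.
    by rewrite ends_q mem_rcons in_cons (negbTE bx) disj // in_cons b_q orbT.
  by apply: selected; [rewrite pieces mem_head | case/andP: (ends_mem ax ends_q)].
exists (x :: p2); last by rewrite ends_q; apply: contraL b_q; apply: disj.
by apply: selected; [rewrite pieces !inE eqxx orbT | case/andP: (ends_mem ax ends_q)].
Qed.

End Restriction.

Section Routes.
Variables (V : finType) (e : rel V) (P : {set {set V}}) (x : V).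
Hypothesis e_sym : symmetric e.
Hypothesis P_pairs : terminal_pairs P.
Hypothesis x_notin_P : x \notin cover P.
Local Notation comp := (component (del_vertex e x)).

(* [route a b] is the path that the gamma0-family of the tree of [a] provides
   for the terminal [a] of the pair {a, b}. *)
Variable route : V -> V -> seq V.
Hypothesis route_path : forall a b, [set a; b] \in P -> a != b ->
  is_path_in e (x |: comp a) (route a b).
Hypothesis route_ends : forall a b, [set a; b] \in P -> a != b ->
  ends (route a b) a x || ends (route a b) a b.
Hypothesis route_disjoint : forall a b a' b',
  [set a; b] \in P -> a != b -> [set a'; b'] \in P -> a' != b' ->
  comp a = comp a' -> route a b != route a' b' ->
  edge_disjoint (route a b) (route a' b').

Lemma edge_disjoint_route a b a' b' :
  [set a; b] \in P -> a != b -> [set a'; b'] \in P -> a' != b' ->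
  [set a; b] != [set a'; b'] -> edge_disjoint (route a b) (route a' b').
Proof.
move=> ab_P ab a'b'_P a'b' ab_a'b'.
have a_a'b' : a \notin [set a'; b'].
  by rewrite (disjointFr (P_pairs.2 _ _ ab_P a'b'_P ab_a'b') (set21 a b)).
have ax := notin_cover_neq x_notin_P ab_P (set21 a b).
have [_ U_a sub_a] := route_path ab_P ab.
have [_ _ sub_a'] := route_path a'b'_P a'b'.
have [same | diff] := eqVneq (comp a) (comp a').
  apply: route_disjoint => //; apply: contra a_a'b' => /eqP same_route.
  have [c ac ends_c] : exists2 c, a != c & ends (route a b) a c.
    by case/orP: (route_ends ab_P ab); [exists x | exists b].
  rewrite same_route in ends_c; rewrite in_set2.
  case/orP: (route_ends a'b'_P a'b') => /(ends_endpoint ac ends_c) //.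
  by rewrite (negbTE ax) orbF => ->.
apply: (edge_disjoint_meet1 (c := x) U_a) => w /sub_a w_a /sub_a' w_a'.
apply/eqP; apply: contraNT diff => wx; move: w_a w_a'.
rewrite !in_setU1 (negbTE wx) /= => w_a w_a'.
by rewrite -(component_eq e_sym w_a) (component_eq e_sym w_a').
Qed.

Lemma route_linking_path a b : [set a; b] \in P -> a != b ->
  exists p, [/\ is_path_in e [set: V] p, ends p a b
             & {subset pedges p <= pedges (route a b) ++ pedges (route b a)}].
Proof.
move=> ab_P ab; have ba_P : [set b; a] \in P by rewrite setUC.
have ba : b != a by rewrite eq_sym.
suff [t [p_t last_t sub_t]] : exists t, [/\ path e a t, last a t = b
    & {subset pedges (a :: t) <= pedges (route a b) ++ pedges (route b a)}].
  have [t' [p_t' U_t' last_t' sub_t']] := shorten_walk p_t.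
  exists (a :: t'); split; last by move=> E /sub_t' /sub_t.
    by split=> // w; rewrite in_setT.
  by rewrite /ends /= eqxx last_t' last_t eqxx.
case/orP: (route_ends ab_P ab) => ends_a; last first.
  have [t [p_t last_t sub]] := walk_between e_sym (route_path ab_P ab) ends_a.
  by exists t; split => // E /sub; rewrite mem_cat => ->.
case/orP: (route_ends ba_P ba) => ends_b; rewrite ends_sym in ends_b; last first.
  have [t [p_t last_t sub]] := walk_between e_sym (route_path ba_P ba) ends_b.
  by exists t; split => // E /sub; rewrite mem_cat => ->; rewrite orbT.
have [t1 [p_t1 last_t1 sub1]] := walk_between e_sym (route_path ab_P ab) ends_a.
have [t2 [p_t2 last_t2 sub2]] := walk_between e_sym (route_path ba_P ba) ends_b.
exists (t1 ++ t2); split; first by rewrite cat_path p_t1 last_t1.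
  by rewrite last_cat last_t1.
move=> E; rewrite pedges_cat last_t1 !mem_cat.
by case/orP=> [/sub1 | /sub2] ->; rewrite ?orbT.
Qed.

Lemma edp_solution_of_routes : exists S, edp_solution e P S.
Proof.
have /fin_all_exists [link link_spec] (q : {set V}) : exists p, q \in P ->
    exists a b, [/\ [set a; b] = q, a != b, is_path_in e [set: V] p, ends p a b
      & {subset pedges p <= pedges (route a b) ++ pedges (route b a)}].
  case: (boolP (q \in P)) => [q_P | _]; last by exists [::].
  have /eqP/cards2P [a [b [ab def_q]]] := P_pairs.1 q q_P.
  rewrite def_q in q_P; have [p [p_path ends_p sub_p]] := route_linking_path q_P ab.
  by exists p => _; exists a, b.
exists [seq link q | q <- enum P]; split; first split.
- move=> p /mapP [q]; rewrite mem_enum => q_P ->.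
  by have [a [b [_ _ ? _ _]]] := link_spec q q_P.
- rewrite pairwise_map; apply: uniq_pairwise_in (enum_uniq _) _ => q q'.
  rewrite !mem_enum => q_P q'_P qq'.
  have [a [b [ab_q ab _ _ sub]]] := link_spec q q_P.
  have [a' [b' [a'b'_q' a'b' _ _ sub']]] := link_spec q' q'_P.
  have ba_q : [set b; a] = q by rewrite setUC.
  have b'a'_q' : [set b'; a'] = q' by rewrite setUC.
  apply/hasPn => E /sub E_q; apply/negP => /sub' E_q'.
  have disj u w u' w' : [set u; w] = q -> u != w -> [set u'; w'] = q' -> u' != w' ->
      E \in pedges (route u w) -> E \in pedges (route u' w') -> False.
    move=> uw_q uw u'w'_q' u'w' E_uw; rewrite -uw_q -u'w'_q' in q_P q'_P qq'.
    apply/negP; move: E_uw.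
    exact: (hasPn (edge_disjoint_route q_P uw q'_P u'w' qq')).
  move: E_q E_q'; rewrite !mem_cat => /orP [] E1 /orP [] E2;
    apply: (disj _ _ _ _ _ _ _ _ E1 E2);
    by rewrite ?ab_q ?ba_q ?a'b'_q' ?b'a'_q' // eq_sym.
move=> a b ab_P ab; exists (link [set a; b]); first by apply: map_f; rewrite mem_enum.
have [a0 [b0 [ab_eq a0b0 _ ends0 _]]] := link_spec _ ab_P.
by apply: ends_set2 ab _ ends0.
Qed.

End Routes.

Lemma edp_solution_of_gamma0_connected (V : finType) (e : rel V)
    (P : {set {set V}}) (x : V) :
  symmetric e -> terminal_pairs P -> x \notin cover P ->
  (forall v, v != x -> gamma0_connected e P x (component (del_vertex e x) v)) ->
  exists S, edp_solution e P S.
Proof.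
move=> e_sym P_pairs x_notin_P conn; set comp := component (del_vertex e x).
have /fin_all_exists [fam fam_spec] (C : {set V}) :
    exists S, forall v, v != x -> C = comp v -> gamma0_witness e P x C S.
  case: (pickP [pred v | (v != x) && (C == comp v)]) => [v /andP [vx /eqP ->] | none].
    by have [S S_conn] := conn v vx; exists S.
  by exists [::] => v vx C_v; move: (none v); rewrite /= vx C_v eqxx.
have /fin_all_exists [route route_spec] (ab : V * V) : exists p,
    [set ab.1; ab.2] \in P -> ab.1 != ab.2 ->
    [/\ p \in fam (comp ab.1), is_path_in e (x |: comp ab.1) p
      & ends p ab.1 x || ends p ab.1 ab.2].
  case: ab => a b /=; case: (boolP (([set a; b] \in P) && (a != b))); last first.
    by move=> not_pair; exists [::] => ab_P ab; rewrite ab_P ab in not_pair.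
  case/andP=> ab_P ab; have ax := notin_cover_neq x_notin_P ab_P (set21 a b).
  have [[fam_path _] fam_term] := fam_spec (comp a) a ax erefl.
  by case: (fam_term a b (mem_component _ _ a) ab_P ab) => -[p p_fam /andP [ends_p _]];
    exists p => _ _; rewrite ends_p ?orbT; split => //; apply: fam_path.
apply: (edp_solution_of_routes e_sym P_pairs x_notin_P
          (route := fun a b => route (a, b))).
- by move=> a b ab_P ab; have [] := route_spec (a, b) ab_P ab.
- by move=> a b ab_P ab; have [] := route_spec (a, b) ab_P ab.
move=> a b a' b' ab_P ab a'b'_P a'b' same_comp; rewrite /= -/comp in same_comp *.
have [r_fam _ _] := route_spec (a, b) ab_P ab.
have [r'_fam _ _] := route_spec (a', b') a'b'_P a'b'.
have ax := notin_cover_neq x_notin_P ab_P (set21 a b).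
have [[_ fam_disj] _] := fam_spec (comp a) a ax erefl.
rewrite -same_comp in r'_fam.
exact: pairwise_sym_in (@edge_disjointC V) fam_disj r_fam r'_fam.
Qed.

Theorem mainTheorem11 (V : finType) (e : rel V) (P : {set {set V}}) (x : V) :
  simple_graph e ->
  terminal_pairs P ->
  acyclic (del_vertex e x) ->
  (forall a, a \in cover P -> deg e a = 1) ->
  (forall a b, [set a; b] \in P -> ~~ e a b) ->
  (forall v, e x v -> deg (del_vertex e x) v <= 1) ->
  x \notin cover P ->
  (exists S : seq (seq V), edp_family e [set: V] S /\
     forall a b, [set a; b] \in P -> a != b ->
       exists2 p, p \in S & ends p a b)
  <->
  (forall v, v != x -> gamma0_connected e P x (component (del_vertex e x) v)).
Proof.
move=> [e_sym _] P_pairs _ _ _ _ x_notin_P; split=> [[S S_sol] v _ | conn].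
  exact: (gamma0_connected_of_edp_solution e_sym x_notin_P S_sol v).
exact: (edp_solution_of_gamma0_connected e_sym P_pairs x_notin_P conn).
Qed.
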